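(* Let $\Psi:\{0,1\}^n\times\{0,1\}^n\to\{\mathtt{A},\mathtt{T},\mathtt{C},\mathtt{G}\}^n$ be the map sending $(\mathbf{a},\mathbf{b})$ to $\mathbf{c}=(c_1,\dots,c_n)$ with $c_i=\mathtt{A},\mathtt{T},\mathtt{C},\mathtt{G}$ according as $(a_i,b_i)=(0,0),(0,1),(1,0),(1,1)$ respectively. Let $\mathcal{C}_1,\mathcal{C}_2\subseteq\{0,1\}^n$ be binary codes and let $\mathcal{C}=\{\Psi(\mathbf{a},\mathbf{b}):\mathbf{a}\in\mathcal{C}_1,\mathbf{b}\in\mathcal{C}_2\}$. Then: (1) if $\mathcal{C}_1$ is balanced, then $\mathcal{C}$ is balanced; (2) if $\mathcal{C}_1$ or $\mathcal{C}_2$ is a $\kappa$-WMU code, then $\mathcal{C}$ is a $\kappa$-WMU code; (3) if $d_1,d_2$ are the minimum Hamming distances of $\mathcal{C}_1,\mathcal{C}_2$, then the minimum Hamming distance of $\mathcal{C}$ is at least $\min(d_1,d_2)$; (4) if $\mathcal{C}_2$ is an $f$-APD code, then $\mathcal{C}$ is an $f$-APD code.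
   Context: $\mathbb{F}_2=\{0,1\}$ and $\mathbb{F}_4$ is identified with the DNA alphabet $\{\mathtt{A},\mathtt{T},\mathtt{C},\mathtt{G}\}$. For $\mathbf{a}=(a_1,\dots,a_n)$ write $\mathbf{a}_i^j=(a_i,\dots,a_j)$ if $i\le j$ and $\mathbf{a}_i^j=(a_i,a_{i-1},\dots,a_j)$ if $i>j$. Complement $\bar{\mathbf{a}}$: for binary sequences flip every bit; for DNA sequences apply $\mathtt{A}\leftrightarrow\mathtt{T}$, $\mathtt{C}\leftrightarrow\mathtt{G}$ coordinatewise. A binary sequence of length $n$ is balanced if exactly $n/2$ of its entries are $1$; a DNA sequence of length $n$ is balanced if exactly $n/2$ of its entries lie in $\{\mathtt{G},\mathtt{C}\}$; a code is balanced if all its codewords are. A code $\mathcal{C}\subseteq\mathbb{F}_q^n$ is $\kappa$-WMU ($1\le\kappa<n$) if for all not necessarily distinct $\mathbf{a},\mathbf{b}\in\mathcal{C}$ and all $\kappa\le l<n$, $\mathbf{a}_1^l\ne\mathbf{b}_{n-l+1}^n$. A code $\mathcal{C}\subseteq\mathbb{F}_q^n$ ($q\in\{2,4\}$) is $f$-APD (avoids primer dimers of effective length $f$) if for all not necessarily distinct $\mathbf{a},\mathbf{b}\in\mathcal{C}$ and all $1\le i,j\le n+1-f$ one has $\bar{\mathbf{a}}_i^{f+i-1}\ne\mathbf{b}_j^{f+j-1}$ and $\bar{\mathbf{a}}_i^{f+i-1}\ne\mathbf{b}_{f+j-1}^{j}$. *)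

From HB Require Import structures.
From mathcomp Require Import all_boot.
Set Implicit Arguments. Unset Strict Implicit. Unset Printing Implicit Defensive.

Inductive dna := dA | dT | dC | dG.

Definition dna_to_pair (x : dna) : bool * bool :=
  match x with dA => (false, false) | dT => (false, true)
             | dC => (true, false) | dG => (true, true) end.
Definition pair_to_dna (p : bool * bool) : dna :=
  match p with (false, false) => dA | (false, true) => dT
             | (true, false) => dC | (true, true) => dG end.
Lemma dna_pairK : cancel dna_to_pair pair_to_dna. Proof. by case. Qed.

HB.instance Definition _ := Finite.copy dna (can_type dna_pairK).

Definition bcomp (x : bool) : bool := ~~ x.
Definition dcomp (x : dna) : dna :=
  match x with dA => dT | dT => dA | dC => dG | dG => dC end.

(* balanced: exactly n/2 entries are 1 (resp. in {G,C}); written 2*count = n *)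
Definition bin_balanced n (C : {set n.-tuple bool}) : Prop :=
  forall a, a \in C -> (count id a).*2 = n.
Definition is_GC (x : dna) : bool := (x == dG) || (x == dC).
Definition dna_balanced n (C : {set n.-tuple dna}) : Prop :=
  forall c, c \in C -> (count is_GC c).*2 = n.

Definition WMU (T : finType) n (kappa : nat) (C : {set n.-tuple T}) : Prop :=
  (1 <= kappa < n) /\
  forall a b, a \in C -> b \in C -> forall l, kappa <= l < n ->
    take l a <> drop (n - l) b.

(* window of length f starting at (1-based) position i: s_i^{f+i-1} *)
Definition window (T : Type) (s : seq T) (i f : nat) : seq T :=
  take f (drop i.-1 s).

Definition APD (T : finType) (comp : T -> T) n (f : nat)
    (C : {set n.-tuple T}) : Prop :=
  forall a b, a \in C -> b \in C -> forall i j,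
    1 <= i <= n + 1 - f -> 1 <= j <= n + 1 - f ->
    window (map comp a) i f <> window b j f /\
    window (map comp a) i f <> rev (window b j f).

Definition ham (T : eqType) (s t : seq T) : nat :=
  count (fun p : T * T => p.1 != p.2) (zip s t).

Definition is_min_dist (T : finType) n (C : {set n.-tuple T}) (d : nat) : Prop :=
  (exists a b, [/\ a \in C, b \in C, a != b & ham a b = d]) /\
  (forall a b, a \in C -> b \in C -> a != b -> d <= ham a b).

Definition Psi n (a b : n.-tuple bool) : n.-tuple dna :=
  [tuple pair_to_dna (tnth a i, tnth b i) | i < n].

Definition PsiCode n (C1 C2 : {set n.-tuple bool}) : {set n.-tuple dna} :=
  [set Psi a b | a in C1, b in C2].

From mathcomp Require Import all_boot.

Set Implicit Arguments.
Unset Strict Implicit.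
Unset Printing Implicit Defensive.

(* Psi (a, b) stores a in the first and b in the second bit of each base, and
   both projections are letterwise maps.  Letterwise maps commute with prefixes,
   suffixes, windows and reversal and do not increase Hamming distance, so each
   property pulls back from C1 or C2 to the DNA code: the GC-content of a base
   is its first bit, and the DNA complement flips exactly the second bit. *)

Definition dna_fst (c : dna) : bool := (dna_to_pair c).1.
Definition dna_snd (c : dna) : bool := (dna_to_pair c).2.

Lemma is_GC_fst : is_GC =1 dna_fst.
Proof. by case. Qed.

Lemma dna_snd_comp (c : dna) : dna_snd (dcomp c) = bcomp (dna_snd c).
Proof. by case: c. Qed.

Lemma eq_dna_seq (s t : seq dna) :
  map dna_fst s = map dna_fst t -> map dna_snd s = map dna_snd t -> s = t.
Proof.
elim: s t => [|x s IHs] [|y t] //= [ex es] [ey et].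
by rewrite (IHs t es et); congr (_ :: _); move: x y ex ey => [] [].
Qed.

Lemma Psi_fst n (a b : n.-tuple bool) : map_tuple dna_fst (Psi a b) = a.
Proof.
apply: val_inj; rewrite /= -map_comp -[RHS](map_tnth_enum a).
by apply: eq_map => i /=; rewrite /dna_fst; case: (tnth a i); case: (tnth b i).
Qed.

Lemma Psi_snd n (a b : n.-tuple bool) : map_tuple dna_snd (Psi a b) = b.
Proof.
apply: val_inj; rewrite /= -map_comp -[RHS](map_tnth_enum b).
by apply: eq_map => i /=; rewrite /dna_snd; case: (tnth a i); case: (tnth b i).
Qed.

Lemma PsiCode_fst n (C1 C2 : {set n.-tuple bool}) x :
  x \in PsiCode C1 C2 -> map_tuple dna_fst x \in C1.
Proof. by case/imset2P=> a b Ca _ ->; rewrite Psi_fst. Qed.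

Lemma PsiCode_snd n (C1 C2 : {set n.-tuple bool}) x :
  x \in PsiCode C1 C2 -> map_tuple dna_snd x \in C2.
Proof. by case/imset2P=> a b _ Cb ->; rewrite Psi_snd. Qed.

Lemma zip_map (S T : Type) (f : S -> T) (s t : seq S) :
  zip (map f s) (map f t) = map (fun p => (f p.1, f p.2)) (zip s t).
Proof. by elim: s t => [|x s IHs] [|y t] //=; rewrite IHs. Qed.

Lemma ham_map_le (S T : eqType) (f : S -> T) (s t : seq S) :
  ham (map f s) (map f t) <= ham s t.
Proof.
rewrite /ham zip_map count_map; apply: sub_count => p /=.
by apply: contra => /eqP ->.
Qed.

Lemma window_map (S T : Type) (f : S -> T) (s : seq S) i k :
  window (map f s) i k = map f (window s i k).
Proof. by rewrite /window map_take map_drop. Qed.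

Section CodePullback.

Variables (T U : finType) (g : T -> U) (n : nat).
Variables (C : {set n.-tuple U}) (D : {set n.-tuple T}).
Hypothesis gD : forall x, x \in D -> map_tuple g x \in C.

Lemma WMU_pullback kappa : WMU kappa C -> WMU kappa D.
Proof.
move=> [kappa_bounds wmuC]; split=> // x y Dx Dy l l_bounds eq_xy.
by have := wmuC _ _ (gD Dx) (gD Dy) l l_bounds; rewrite /= -map_take eq_xy map_drop.
Qed.

Lemma APD_pullback (compT : T -> T) (compU : U -> U) f :
  (forall t, g (compT t) = compU (g t)) -> APD compU f C -> APD compT f D.
Proof.
move=> g_comp apdC x y Dx Dy i j i_bounds j_bounds.
have [ne_fwd ne_rev] := apdC _ _ (gD Dx) (gD Dy) i j i_bounds j_bounds.
have map_compU : map compU (map_tuple g x) = map g (map compT x).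
  by rewrite /= -!map_comp; apply: eq_map => t /=; rewrite g_comp.
rewrite map_compU /= !(window_map g) -map_rev in ne_fwd ne_rev.
by split=> eq_win; [apply: ne_fwd | apply: ne_rev]; rewrite eq_win.
Qed.

End CodePullback.

Lemma PsiCode_ham_ge_min n (C1 C2 : {set n.-tuple bool}) d1 d2 x y :
  is_min_dist C1 d1 -> is_min_dist C2 d2 ->
  x \in PsiCode C1 C2 -> y \in PsiCode C1 C2 -> x != y -> minn d1 d2 <= ham x y.
Proof.
move=> [_ minC1] [_ minC2] Cx Cy x_ne_y.
have [eq_fst | ne_fst] := eqVneq (map_tuple dna_fst x) (map_tuple dna_fst y).
  have [eq_snd | ne_snd] := eqVneq (map_tuple dna_snd x) (map_tuple dna_snd y).
    by case/eqP: x_ne_y; apply/val_inj/eq_dna_seq; [case: eq_fst | case: eq_snd].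
  apply: leq_trans (geq_minr _ _) (leq_trans _ (ham_map_le dna_snd x y)).
  exact: minC2 (PsiCode_snd Cx) (PsiCode_snd Cy) ne_snd.
apply: leq_trans (geq_minl _ _) (leq_trans _ (ham_map_le dna_fst x y)).
exact: minC1 (PsiCode_fst Cx) (PsiCode_fst Cy) ne_fst.
Qed.

Theorem lemma2 (n : nat) (C1 C2 : {set n.-tuple bool}) :
  (bin_balanced C1 -> dna_balanced (PsiCode C1 C2)) /\
  (forall kappa, WMU kappa C1 \/ WMU kappa C2 -> WMU kappa (PsiCode C1 C2)) /\
  (forall d1 d2, is_min_dist C1 d1 -> is_min_dist C2 d2 ->
     forall x y, x \in PsiCode C1 C2 -> y \in PsiCode C1 C2 -> x != y ->
       minn d1 d2 <= ham x y) /\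
  (forall f, APD bcomp f C2 -> APD dcomp f (PsiCode C1 C2)).
Proof.
split; [|split; [|split]].
- move=> balC1 x Cx; rewrite (eq_count is_GC_fst).
  by have := balC1 _ (PsiCode_fst Cx); rewrite /= count_map.
- move=> kappa [wmuC1 | wmuC2].
  + exact: WMU_pullback (@PsiCode_fst _ C1 C2) _ wmuC1.
  + exact: WMU_pullback (@PsiCode_snd _ C1 C2) _ wmuC2.
- by move=> d1 d2 minC1 minC2 x y; apply: PsiCode_ham_ge_min.
- move=> f apdC2.
  exact: APD_pullback (@PsiCode_snd _ C1 C2) _ _ _ dna_snd_comp apdC2.
Qed.
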